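(* For the $N$-relay 1-2-1 diamond network, in both the FD and HD cases, $\max_{p\in[1:N]}\mathsf C_p\ge\frac12\mathsf{C}_{\rm cs,iid}$ (with $\mathsf C_p$ and $\mathsf{C}_{\rm cs,iid}$ of the corresponding mode). Moreover the constant $\tfrac12$ is best possible in both modes: for every $\varepsilon>0$ there is a diamond network (with $N=2$) such that $\max_p\mathsf C_p\le(\tfrac12+\varepsilon)\mathsf{C}_{\rm cs,iid}$.
   Context: Diamond network: nodes $[0:N+1]$, source $0$, destination $N+1$, relays $[1:N]$; the only links are $(0,p)$ and $(p,N+1)$ for $p\in[1:N]$, with positive rational capacities $\ell_{p,0}$ and $\ell_{N+1,p}$; all other $\ell_{j,i}=0$. $\mathsf C_p=\min\{\ell_{p,0},\ell_{N+1,p}\}$ in FD and $\mathsf C_p=\frac{\ell_{p,0}\ell_{N+1,p}}{\ell_{p,0}+\ell_{N+1,p}}$ in HD. Network states: a state $s$ consists of sets $s_{i,t}\subseteq[1:N+1]\setminus\{i\}$ and $s_{i,r}\subseteq[0:N]\setminus\{i\}$, each of cardinality at most $1$, for $i\in[0:N+1]$, with $s_{0,r}=s_{N+1,t}=\emptyset$; in HD mode additionally $|s_{i,t}|+|s_{i,r}|\le1$ for $i\in[1:N]$. $\mathcal S$ is the set of all states of the mode. Link $(i,j)$ is active in $s$ if $j\in s_{i,t}$ and $i\in s_{j,r}$. $\mathsf{C}_{\rm cs,iid}=\max_{\lambda}\min_{\Omega}\sum_{i\in\Omega,\ j\in\Omega^c}\big(\sum_{s\in\mathcal S:\ (i,j)\text{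 active in }s}\lambda_s\big)\ell_{j,i}$, maximum over probability vectors $(\lambda_s)_{s\in\mathcal S}$, minimum over $\Omega$ with $0\in\Omega\subseteq[0:N]$, $\Omega^c=[0:N+1]\setminus\Omega$. *)

From HB Require Import structures.
From mathcomp Require Import all_boot all_order all_algebra.
Set Implicit Arguments. Unset Strict Implicit. Unset Printing Implicit Defensive.
Import Order.TTheory GRing.Theory Num.Theory.
Local Open Scope ring_scope.

(* Nodes of the N-relay diamond are 'I_(N.+2) = [0 : N+1];
   source 0 = ord0, destination N+1 = ord_max, relays 1..N.
   The network is given by a p = l_{p,0} (source -> relay p) and
   b p = l_{N+1,p} (relay p -> destination), for p in [1:N]. *)

Section Diamond.
Variable N : nat.
Notation node := 'I_N.+2.

Definition src : node := ord0.
Definition dst : node := ord_max.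
Definition is_relay (i : node) : bool := (0 < i)%N && (i <= N)%N.

(* ell a b j i = l_{j,i}: capacity of the link from i to j. *)
Definition ell (a b : nat -> rat) (j i : node) : rat :=
  if (i == src) && is_relay j then a j
  else if is_relay i && (j == dst) then b i
  else 0.

(* A network state: for every node i, the pair (s_{i,t}, s_{i,r}). *)
Definition state := {ffun node -> {set node} * {set node}}.
Definition stx (s : state) (i : node) : {set node} := (s i).1.
Definition srx (s : state) (i : node) : {set node} := (s i).2.

(* Valid states of the mode (hd = true: half duplex, false: full duplex). *)
Definition valid_state (hd : bool) (s : state) : bool :=
  [forall i : node,
    [&& #|stx s i| <= 1, #|srx s i| <= 1,
        i \notin stx s i, i \notin srx s i,
        src \notin stx s i, dst \notin srx s i &
        (hd && is_relay i) ==> (#|stx s i| + #|srx s i| <= 1)]%N]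
  && (srx s src == set0) && (stx s dst == set0).

Definition active (s : state) (i j : node) : bool :=
  (j \in stx s i) && (i \in srx s j).

Definition prob_vec (hd : bool) (lam : state -> rat) : Prop :=
  (forall s, valid_state hd s -> 0 <= lam s) /\
  \sum_(s | valid_state hd s) lam s = 1.

Definition is_cut (Om : {set node}) : bool := (src \in Om) && (dst \notin Om).

Definition cut_value hd (a b : nat -> rat) (lam : state -> rat) (Om : {set node}) : rat :=
  \sum_(i in Om) \sum_(j in ~: Om)
     (\sum_(s | valid_state hd s && active s i j) lam s) * ell a b j i.

(* min over cuts Omega (a nonempty finite family: [set src] is a cut) *)
Definition min_cut hd a b lam : rat :=
  \big[Num.min/cut_value hd a b lam [set src]]_(Om | is_cut Om) cut_value hd a b lam Om.

(* C is the value C_cs,iid = max_lambda min_Omega (...) *)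
Definition is_Ccs (hd : bool) (a b : nat -> rat) (C : rat) : Prop :=
  (exists lam, prob_vec hd lam /\ min_cut hd a b lam = C) /\
  (forall lam, prob_vec hd lam -> min_cut hd a b lam <= C).

End Diamond.

Definition Cp (hd : bool) (a b : nat -> rat) (p : nat) : rat :=
  if hd then a p * b p / (a p + b p) else Num.min (a p) (b p).

Definition maxCp (hd : bool) (N : nat) (a b : nat -> rat) : rat :=
  \big[Num.max/0]_(1 <= p < N.+1) Cp hd a b p.

Definition diamond_caps (N : nat) (a b : nat -> rat) : Prop :=
  forall p, (0 < p <= N)%N -> 0 < a p /\ 0 < b p.

From HB Require Import structures.
From mathcomp Require Import all_boot all_order all_algebra.
From mathcomp Require Import ring lra.
Set Implicit Arguments. Unset Strict Implicit. Unset Printing Implicit Defensive.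
Import Order.TTheory GRing.Theory Num.Theory.
Local Open Scope ring_scope.

(* In a diamond every cut crosses, for each relay j, exactly one of the links
   0 -> j and j -> N+1.  Cutting the cheaper of the two, relay j contributes
   min(x_j a_j, y_j b_j) <= C_j (x_j + y_j) <= max_p C_p (x_j + y_j), where x_j
   and y_j are the probabilities that the links are active.  As the source
   sends to at most one relay and the destination listens to at most one relay
   in every state, sum_j x_j <= 1 and sum_j y_j <= 1, whence the factor 2.
   Conversely, take N = 2, a = (A, 1) and b = (1, A).  Time-sharing between
   the two states in which the source feeds one relay while the other relay
   forwards to the destination, with weight 1/(A+1) on the state using the two
   strong links, gives every cut the value 2A/(A+1); the cuts {0,1} and {0,2}
   show that no schedule does better.  Yet every relay has C_p <= 1, and
   A = 1/eps makes 2A/(A+1) = 2/(1+eps). *)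

Lemma sum_card_le1_le (R : numDomainType) (I T : finType) (V : pred T)
    (lam : T -> R) (X : T -> {set I}) (P : pred I) (Q : T -> pred I) :
  (forall s, V s -> 0 <= lam s) -> (forall s, V s -> #|X s| <= 1)%N ->
  (forall s j, V s -> P j -> Q s j -> j \in X s) ->
  \sum_(j | P j) \sum_(s | V s && Q s j) lam s <= \sum_(s | V s) lam s.
Proof.
move=> lam_ge0 X_le1 QX.
rewrite (exchange_big_dep V) /=; last by move=> j s _ /andP[].
apply: ler_sum => s Vs.
apply: (@le_trans _ _ (\sum_(j in X s) lam s)).
  rewrite [leRHS]big_mkcond [leLHS]big_mkcond /=; apply: ler_sum => j _.
  case: ifP => [/and3P[Pj _ Qsj]|_]; first by rewrite (QX s j).
  by case: ifP => // _; apply: lam_ge0.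
rewrite sumr_const.
by case: #|X s| (X_le1 s Vs) => [|[|//]] _; rewrite ?mulr0n ?mulr1n ?lam_ge0.
Qed.

Section Diamond.
Variables (N : nat) (hd : bool).
Implicit Types (lam : state N -> rat) (a b : nat -> rat) (Om : {set 'I_N.+2}).

Definition link_weight lam (i j : 'I_N.+2) : rat :=
  \sum_(s | valid_state hd s && active s i j) lam s.

Lemma link_weight_ge0 lam i j : prob_vec hd lam -> 0 <= link_weight lam i j.
Proof. by move=> [lam_ge0 _]; apply: sumr_ge0 => s /andP[/lam_ge0]. Qed.

Lemma valid_state_at (s : state N) i : valid_state hd s ->
  [&& #|stx s i| <= 1, #|srx s i| <= 1,
      i \notin stx s i, i \notin srx s i,
      src N \notin stx s i, dst N \notin srx s i &
      (hd && is_relay i) ==> (#|stx s i| + #|srx s i| <= 1)]%N.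
Proof. by move=> /andP[/andP[/forallP]]. Qed.

Lemma sum_link_weight_src_le1 lam : prob_vec hd lam ->
  \sum_(j | is_relay j) link_weight lam (src N) j <= 1.
Proof.
move=> [lam_ge0 <-].
apply: (@sum_card_le1_le _ _ _ _ lam (fun s => stx s (src N)) _
                         (fun s j => active s (src N) j)) => //.
- by move=> s /(valid_state_at (src N)) /and5P[].
- by move=> s j _ _ /andP[].
Qed.

Lemma sum_link_weight_dst_le1 lam : prob_vec hd lam ->
  \sum_(j | is_relay j) link_weight lam j (dst N) <= 1.
Proof.
move=> [lam_ge0 <-].
apply: (@sum_card_le1_le _ _ _ _ lam (fun s => srx s (dst N)) _
                         (fun s j => active s j (dst N))) => //.
- by move=> s /(valid_state_at (dst N)) /and5P[].
- by move=> s j _ _ /andP[].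
Qed.

Lemma dst_not_relay : is_relay (dst N) = false.
Proof. by rewrite /is_relay /dst /= ltnn. Qed.

Lemma cut_value_diamond a b lam Om : is_cut Om ->
  cut_value hd a b lam Om = \sum_(j | is_relay j)
    (if j \in Om then link_weight lam j (dst N) * b j
     else link_weight lam (src N) j * a j).
Proof.
move=> /andP[srcOm dstOm].
rewrite /cut_value (bigD1 (src N)) //=.
have -> : \sum_(i in Om | i != src N) \sum_(j in ~: Om)
    (\sum_(s | valid_state hd s && active s i j) lam s) * ell a b j i
  = \sum_(j | is_relay j && (j \in Om)) link_weight lam j (dst N) * b j.
  rewrite [RHS]big_mkcond [LHS]big_mkcond; apply: eq_bigr => i _.
  case: ifP => [/andP[iOm i_src]|].
    rewrite (bigD1 (dst N)) ?inE //= [X in _ + X]big1 ?addr0.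
      rewrite /ell (negbTE i_src) /= eqxx andbT iOm andbT.
      by case: ifP => _; rewrite ?mulr0.
    by move=> j /andP[_ j_dst]; rewrite /ell (negbTE i_src) /= (negbTE j_dst) andbF mulr0.
  move=> not_iOm; case: ifP => // /andP[i_relay iOm]; move: not_iOm.
  by rewrite iOm /= => /negbFE/eqP i_src; rewrite i_src in i_relay.
rewrite [RHS](bigID (fun j => j \in Om)) /= addrC; congr (_ + _).
  by apply: eq_bigr => j /andP[_ ->].
rewrite [RHS]big_mkcond [LHS]big_mkcond; apply: eq_bigr => j _.
rewrite /ell eqxx /= inE.
by case: (is_relay j); case: (j \in Om); rewrite //= mulr0.
Qed.

Lemma min_cut_le_cut a b lam Om :
  is_cut Om -> min_cut hd a b lam <= cut_value hd a b lam Om.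
Proof. exact: bigmin_le_cond. Qed.

Lemma is_Ccs_witness a b lam0 (C : rat) : prob_vec hd lam0 ->
  (forall Om, is_cut Om -> C <= cut_value hd a b lam0 Om) ->
  (forall lam, prob_vec hd lam -> min_cut hd a b lam <= C) ->
  is_Ccs N hd a b C.
Proof.
move=> lam0P lam0_ge lam_le; split=> //; exists lam0; split=> //.
apply: le_anti; rewrite lam_le //=.
by apply: le_bigmin => [|Om /lam0_ge //]; apply: lam0_ge; rewrite /is_cut !inE.
Qed.

End Diamond.

Lemma min_le_Cp hd (a b : nat -> rat) p (x y : rat) :
  0 < a p -> 0 < b p -> 0 <= x -> 0 <= y ->
  Num.min (y * b p) (x * a p) <= Cp hd a b p * (x + y).
Proof.
move=> ap_gt0 bp_gt0 x_ge0 y_ge0; rewrite minEle /Cp.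
case: hd.
  rewrite mulrAC ler_pdivlMr ?addr_gt0 //.
  by case: ifP => yx; nra.
by case: (leP (a p) (b p)) => ab; case: ifP => yx; nra.
Qed.

Lemma Cp_le_min hd (a b : nat -> rat) p :
  0 < a p -> 0 < b p -> Cp hd a b p <= Num.min (a p) (b p).
Proof.
move=> ap_gt0 bp_gt0; rewrite /Cp; case: hd => //.
rewrite le_min !ler_pdivrMr ?addr_gt0 //.
by apply/andP; split; nra.
Qed.

Lemma Cp_le_maxCp hd N (a b : nat -> rat) p :
  (0 < p <= N)%N -> Cp hd a b p <= maxCp hd N a b.
Proof. by move=> p_relay; apply: le_bigmax_seq; rewrite ?mem_index_iota ?ltnS. Qed.

Lemma maxCp_ge0 hd N (a b : nat -> rat) : 0 <= maxCp hd N a b.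
Proof. exact: bigmax_ge_id. Qed.

Lemma min_cut_le_2maxCp hd N (a b : nat -> rat) (lam : state N -> rat) :
  diamond_caps N a b -> prob_vec hd lam ->
  min_cut hd a b lam <= 2 * maxCp hd N a b.
Proof.
move=> caps lamP; set M := maxCp hd N a b.
pose x j := link_weight hd lam (src N) j.
pose y j := link_weight hd lam j (dst N).
pose Om := src N |: [set j | is_relay j && (y j * b j <= x j * a j)].
have Om_cut : is_cut Om by rewrite /is_cut !inE eqxx /= dst_not_relay.
apply: (le_trans (min_cut_le_cut hd a b lam Om_cut)); rewrite cut_value_diamond //.
have relay_bound j : is_relay j ->
    (if j \in Om then y j * b j else x j * a j) <= M * (x j + y j).
  move=> j_relay; have [aj_gt0 bj_gt0] := caps _ j_relay.
  have j_src : j != src N by apply: contraTneq j_relay => ->.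
  rewrite /Om !inE (negbTE j_src) j_relay -minEle.
  have [xj_ge0 yj_ge0] := (link_weight_ge0 (src N) j lamP, link_weight_ge0 j (dst N) lamP).
  apply: (le_trans (min_le_Cp hd aj_gt0 bj_gt0 xj_ge0 yj_ge0)).
  by rewrite ler_wpM2r ?addr_ge0 ?Cp_le_maxCp.
apply: (le_trans (ler_sum _ relay_bound)).
rewrite -mulr_sumr big_split /=.
have := sum_link_weight_src_le1 lamP; have := sum_link_weight_dst_le1 lamP.
have := maxCp_ge0 hd N a b; rewrite -/M => *; nra.
Qed.

Definition relay1 : 'I_4 := @Ordinal 4 1 isT.
Definition relay2 : 'I_4 := @Ordinal 4 2 isT.

Lemma sum_relays2 (F : 'I_4 -> rat) : \sum_(j | is_relay j) F j = F relay1 + F relay2.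
Proof.
rewrite (bigD1 relay1) // (bigD1 relay2) //= big1 ?addr0 //.
by case=> [[|[|[|[|]]]] ?].
Qed.

Definition feed1_drain2 : state 2 := [ffun i =>
  if i == src 2 then ([set relay1], set0) else if i == relay1 then (set0, [set src 2])
  else if i == relay2 then ([set dst 2], set0) else (set0, [set relay2])].
Definition feed2_drain1 : state 2 := [ffun i =>
  if i == src 2 then ([set relay2], set0) else if i == relay1 then ([set dst 2], set0)
  else if i == relay2 then (set0, [set src 2]) else (set0, [set relay1])].

Lemma feed1_drain2_valid hd : valid_state hd feed1_drain2.
Proof.
rewrite /valid_state /stx /srx !ffunE /= eqxx !andbT; apply/forallP.
by case=> [[|[|[|[|//]]]] ?]; rewrite ffunE /= ?cards1 ?cards0 ?inE /= ?implybT.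
Qed.

Lemma feed2_drain1_valid hd : valid_state hd feed2_drain1.
Proof.
rewrite /valid_state /stx /srx !ffunE /= eqxx !andbT; apply/forallP.
by case=> [[|[|[|[|//]]]] ?]; rewrite ffunE /= ?cards1 ?cards0 ?inE /= ?implybT.
Qed.

Lemma feed1_drain2_neq : feed1_drain2 != feed2_drain1.
Proof.
apply/eqP => /(congr1 (fun s : state 2 => relay1 \in stx s (src 2))).
by rewrite /stx !ffunE /= !inE.
Qed.

Definition time_share (t : rat) (s : state 2) : rat :=
  if s == feed1_drain2 then t else if s == feed2_drain1 then 1 - t else 0.

Lemma sum_time_share hd t (P : pred (state 2)) :
  \sum_(s | valid_state hd s && P s) time_share t s =
  (if P feed1_drain2 then t else 0) + (if P feed2_drain1 then 1 - t else 0).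
Proof.
rewrite big_mkcond (bigD1 feed1_drain2) //= (bigD1 feed2_drain1) //=; last first.
  by rewrite eq_sym feed1_drain2_neq.
rewrite big1 ?addr0 ?addrA.
  by rewrite !feed1_drain2_valid !feed2_drain1_valid /time_share eqxx
             eq_sym (negbTE feed1_drain2_neq) eqxx.
by move=> s /andP[s1 s2]; rewrite /time_share (negbTE s1) (negbTE s2); case: ifP.
Qed.

Lemma time_share_prob hd t : 0 <= t <= 1 -> prob_vec hd (time_share t).
Proof.
move=> /andP[t_ge0 t_le1]; split.
  by move=> s _; rewrite /time_share; case: ifP => _; last case: ifP; lra.
rewrite (eq_bigl (fun s => valid_state hd s && predT s)) => [|s]; last by rewrite andbT.
by rewrite sum_time_share /= addrC subrK.
Qed.

Lemma link_weight_time_share hd t :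
  [/\ link_weight hd (time_share t) (src 2) relay1 = t,
      link_weight hd (time_share t) relay2 (dst 2) = t,
      link_weight hd (time_share t) (src 2) relay2 = 1 - t &
      link_weight hd (time_share t) relay1 (dst 2) = 1 - t].
Proof.
by rewrite /link_weight !sum_time_share /active /stx /srx !ffunE /= !inE /= !addr0 !add0r.
Qed.

Definition example_a (A : rat) (p : nat) : rat := if p == 1%N then A else 1.
Definition example_b (A : rat) (p : nat) : rat := if p == 2%N then A else 1.

Lemma example_caps (A : rat) : 0 < A -> diamond_caps 2 (example_a A) (example_b A).
Proof. by move=> A_gt0 p _; rewrite /example_a /example_b; split; case: ifP. Qed.

Lemma example_cut_value (A : rat) hd (lam : state 2 -> rat) (Om : {set 'I_4}) :
  is_cut Om ->
  cut_value hd (example_a A) (example_b A) lam Om =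
    (if relay1 \in Om then link_weight hd lam relay1 (dst 2)
     else link_weight hd lam (src 2) relay1 * A) +
    (if relay2 \in Om then link_weight hd lam relay2 (dst 2) * A
     else link_weight hd lam (src 2) relay2).
Proof.
by move=> Om_cut; rewrite cut_value_diamond // sum_relays2 /example_a /example_b /= !mulr1.
Qed.

Lemma example_min_cut_le (A : rat) hd (lam : state 2 -> rat) :
  0 < A -> prob_vec hd lam ->
  min_cut hd (example_a A) (example_b A) lam <= 2 * A / (A + 1).
Proof.
move=> A_gt0 lamP; set m := min_cut _ _ _ _.
have cut1 : is_cut [set src 2; relay1] by rewrite /is_cut !inE.
have cut2 : is_cut [set src 2; relay2] by rewrite /is_cut !inE.
have := min_cut_le_cut hd (example_a A) (example_b A) lam cut1.
have := min_cut_le_cut hd (example_a A) (example_b A) lam cut2.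
rewrite !example_cut_value // !inE /= -/m => m_le_Au m_le_v.
have := sum_link_weight_src_le1 lamP; have := sum_link_weight_dst_le1 lamP.
rewrite !sum_relays2 ler_pdivlMr ?addr_gt0 // => /(ler_wpM2r (ltW A_gt0)) dst_le1.
move=> /(ler_wpM2r (ltW A_gt0)) src_le1.
have := ler_wpM2r (ltW A_gt0) m_le_v; lra.
Qed.

Lemma example_is_Ccs (A : rat) hd :
  0 < A -> is_Ccs 2 hd (example_a A) (example_b A) (2 * A / (A + 1)).
Proof.
move=> A_gt0; have A1_gt0 : 0 < A + 1 by lra.
have t_def : (A + 1)^-1 * A = 1 - (A + 1)^-1 by field; rewrite gt_eqF.
have C_def : 2 * A / (A + 1) = 2 * (1 - (A + 1)^-1).
  by rewrite -t_def [RHS]mulrA [RHS]mulrAC.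
have t_ge0 : 0 <= (A + 1)^-1 by rewrite invr_ge0 ltW.
apply: (is_Ccs_witness (lam0 := time_share (A + 1)^-1)).
- apply: time_share_prob; rewrite t_ge0 /= invr_le1 ?unitfE ?gt_eqF //; lra.
- move=> Om Om_cut; rewrite example_cut_value // C_def.
  have [-> -> -> ->] := link_weight_time_share hd (A + 1)^-1.
  by case: (relay1 \in Om); case: (relay2 \in Om); lra.
- by move=> lam; apply: example_min_cut_le.
Qed.

Lemma example_maxCp_le1 (A : rat) hd :
  0 < A -> maxCp hd 2 (example_a A) (example_b A) <= 1.
Proof.
move=> A_gt0; apply: bigmax_le => // p _.
have [ap_gt0 bp_gt0] : 0 < example_a A p /\ 0 < example_b A p.
  by rewrite /example_a /example_b; split; case: ifP.
apply: (le_trans (Cp_le_min hd ap_gt0 bp_gt0)).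
rewrite ge_min /example_a /example_b.
by case: (eqVneq p 1%N) => [->|_] //=; rewrite lexx orbT.
Qed.

Theorem lemma5 :
  (forall (hd : bool) (N : nat) (a b : nat -> rat),
      (0 < N)%N -> diamond_caps N a b ->
      forall C : rat, is_Ccs N hd a b C -> C / 2 <= maxCp hd N a b)
  /\
  (forall (hd : bool) (eps : rat), 0 < eps ->
      exists a b : nat -> rat, diamond_caps 2 a b /\
        exists C : rat, is_Ccs 2 hd a b C /\ maxCp hd 2 a b <= (1/2 + eps) * C).
Proof.
split=> [hd N a b _ caps C [[lam [lamP <-]] _]|hd eps eps_gt0].
  by have := min_cut_le_2maxCp caps lamP; lra.
have A_gt0 : 0 < eps^-1 by rewrite invr_gt0.
exists (example_a eps^-1), (example_b eps^-1); split; first exact: example_caps.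
exists (2 * eps^-1 / (eps^-1 + 1)); split; first exact: example_is_Ccs.
apply: (le_trans (example_maxCp_le1 hd A_gt0)).
have -> : (1/2 + eps) * (2 * eps^-1 / (eps^-1 + 1)) = (1 + 2 * eps) / (1 + eps).
  by field; rewrite !gt_eqF ?addr_gt0.
by rewrite ler_pdivlMr ?addr_gt0 //; lra.
Qed.
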